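(* Let $G$ be a finite simple graph and let $c>0$ and $t>0$ be constants with $t\le c\,\frac{\epsilon(G)}{|G|}$. Then $$Ldyn_t(G)<\frac{c}{c+1}|G|.$$
   Context: For a graph $G$, $|G|$ is its number of vertices and $\epsilon(G)=|E(G)|/|G|$. A threshold assignment is a function $\tau:V(G)\to\{0,1,2,\dots\}$ with $\tau(v)\le deg_G(v)$ for every $v$; its average is $\overline{\tau}=\sum_v\tau(v)/|G|$. A set $D\subseteq V(G)$ is a $\tau$-dynamo if $V(G)$ can be partitioned into $D_0=D,D_1,\dots,D_k$ such that for each $1\le i\le k$, $D_i$ consists of all vertices not in $D_0\cup\dots\cup D_{i-1}$ having at least $\tau(v)$ neighbors in $D_0\cup\dots\cup D_{i-1}$; $dyn_\tau(G)$ is the minimum size of a $\tau$-dynamo. $Ldyn_t(G)=\max\{dyn_\tau(G):\overline{\tau}\le t\}$. *)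

From mathcomp Require Import all_boot all_order all_algebra.
From mathcomp Require Import boolp.
Set Implicit Arguments. Unset Strict Implicit. Unset Printing Implicit Defensive.
Import Order.TTheory GRing.Theory Num.Theory.

Section Graph.
Variables (V : finType) (e : rel V).

Definition nbhd (v : V) : {set V} := [set u | e v u].
Definition deg (v : V) : nat := #|nbhd v|.

Definition edges : {set {set V}} :=
  [set E : {set V} | [exists x, exists y, e x y && (E == [set x; y])]].

Definition eps (R : numFieldType) : R := (#|edges|)%:R / (#|V|)%:R.

(* threshold assignments; values are naturals bounded by deg <= |V| *)
Definition thr := {ffun V -> 'I_(#|V|.+1)}.
Definition valid_thr (tau : thr) : bool := [forall v, (tau v : nat) <= deg v].
Definition avg_thr (R : numFieldType) (tau : thr) : R :=
  (\sum_(v : V) (tau v : nat))%:R / (#|V|)%:R.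

Fixpoint activated (tau : thr) (D : {set V}) (i : nat) : {set V} :=
  match i with
  | 0 => D
  | i'.+1 => let A := activated tau D i' in
             A :|: [set v in ~: A | (tau v : nat) <= #|nbhd v :&: A|]
  end.

Definition is_dynamo (tau : thr) (D : {set V}) : Prop :=
  exists k, activated tau D k = [set: V].

(* dyn_tau(G): minimum size of a tau-dynamo (V itself is one, so the min is attained) *)
Definition dyn (tau : thr) : nat :=
  \big[minn/#|V|]_(D : {set V} | `[< is_dynamo tau D >]) #|D|.

Definition Ldyn (R : numFieldType) (t : R) : nat :=
  \max_(tau : thr | valid_thr tau && (avg_thr R tau <= t)%R) dyn tau.

End Graph.

From mathcomp Require Import all_boot all_order all_algebra.
From mathcomp Require Import boolp ring lra.
Set Implicit Arguments. Unset Strict Implicit. Unset Printing Implicit Defensive.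
Import Order.TTheory GRing.Theory Num.Theory.
Local Open Scope ring_scope.

(* For W a set of vertices and d_W(u) the number of neighbours of u in W, put
   Phi(W) = sum_(u in W) w(tau u, d_W(u)), where w(a, d) = a / (d + 1) if a <= d and
   w(a, d) = 1 otherwise.  Averaging Phi(W \ v) over v in W shows that some v satisfies
   [tau v > d_W(v)] + Phi(W \ v) <= Phi(W): either v is activated by its neighbours in
   W \ v, or v is put into the seed set at cost 1.  By induction there is a dynamo of
   size at most Phi(V) <= sum_v tau(v) / (tau(v) + 1), which by concavity of x / (x + 1)
   is at most |G| t / (t + 1) when the average threshold is at most t.  Finally
   eps(G) < |G|, so the hypothesis gives t < c, and x / (x + 1) is increasing. *)

Section Weight.
Variable R : realFieldType.

Definition weight (a d : nat) : R := if (a <= d)%N then a%:R / d.+1%:R else 1.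

Lemma mul_weight_pred (a d : nat) : (a <= d)%N -> d%:R * weight a d.-1 = a%:R.
Proof.
case: d => [|d]; first by rewrite leqn0 => /eqP->; rewrite !mul0r.
rewrite /weight /= leq_eqVlt ltnS => /orP[/eqP->|a_le_d].
  by rewrite ltnn mulr1.
by rewrite a_le_d mulrC divfK ?pnatr_eq0.
Qed.

Lemma weight_recurrence (a d r : nat) :
  (if (a <= d)%N then 0 else 1) + d%:R * weight a d.-1 + r%:R * weight a d
  = (d + r).+1%:R * weight a d.
Proof.
case: (leqP a d) => [a_le_d|d_lt_a].
  rewrite add0r mul_weight_pred // /weight a_le_d -addSn natrD mulrDl.
  by rewrite [d.+1%:R * _]mulrC divfK ?pnatr_eq0.
rewrite /weight (leqNgt a d) d_lt_a (leqNgt a d.-1) (leq_ltn_trans (leq_pred d) d_lt_a).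
by rewrite !mulr1 -addrA -natrD addrC natr1.
Qed.

Lemma weight_le_div_add1 (a d : nat) : (a <= d)%N -> weight a d <= a%:R / (a%:R + 1).
Proof.
move=> a_le_d; rewrite /weight a_le_d natr1 ler_wpM2l // lef_pV2 ?posrE //.
by rewrite ler_nat ltnS.
Qed.

Lemma div_add1_le_tangent (x t : R) : 0 <= x -> 0 < t ->
  x / (x + 1) <= t / (t + 1) + (x - t) / (t + 1) ^+ 2.
Proof.
move=> x_ge0 t_gt0.
have x1_neq0 : x + 1 != 0 by rewrite gt_eqF // ltr_wpDl.
have t1_neq0 : t + 1 != 0 by rewrite gt_eqF // ltr_wpDl // ltW.
have -> : t / (t + 1) + (x - t) / (t + 1) ^+ 2 =
    x / (x + 1) + (x - t) ^+ 2 / ((x + 1) * (t + 1) ^+ 2).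
  by field; rewrite x1_neq0 t1_neq0.
by rewrite lerDl divr_ge0 ?sqr_ge0 // mulr_ge0 ?sqr_ge0 //; lra.
Qed.

Lemma sum_div_add1_le (I : finType) (x : I -> R) (t : R) : 0 < t ->
  (forall i, 0 <= x i) -> \sum_i x i <= t *+ #|I| ->
  \sum_i x i / (x i + 1) <= t / (t + 1) *+ #|I|.
Proof.
move=> t_gt0 x_ge0 sum_x.
apply: le_trans (ler_sum _ (fun i _ => div_add1_le_tangent (x_ge0 i) t_gt0)) _.
rewrite big_split /= sumr_const -mulr_suml sumrB sumr_const gerDl.
by rewrite pmulr_lle0 ?subr_le0 // invr_gt0 exprn_gt0 // ltr_wpDl // ltW.
Qed.

Lemma ltr_div_add1 (x y : R) : 0 <= x -> x < y -> x / (x + 1) < y / (y + 1).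
Proof.
move=> x_ge0 x_lt_y.
have x1_gt0 : 0 < x + 1 by lra.
have y1_gt0 : 0 < y + 1 by lra.
by rewrite ltr_pdivrMr // mulrAC ltr_pdivlMr //; nra.
Qed.

End Weight.

Section Activation.
Variables (V : finType) (e : rel V) (tau : thr V).
Hypothesis e_irr : irreflexive e.

Definition deg_in (W : {set V}) (u : V) : nat := #|nbhd e u :&: W|.

Lemma deg_in_setD1 (W : {set V}) u v : v \in W ->
  deg_in (W :\ v) u = if e u v then (deg_in W u).-1 else deg_in W u.
Proof.
rewrite /deg_in setIDA (cardsD1 v (nbhd e u :&: W)) !inE => ->.
by case: (e u v).
Qed.

Lemma activated_subS (D : {set V}) k :
  activated e tau D k \subset activated e tau D k.+1.
Proof. exact: subsetUl. Qed.

Lemma activated_sub (D : {set V}) k : D \subset activated e tau D k.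
Proof. elim: k => [|k IH] //; exact: subset_trans IH (activated_subS D k). Qed.

Lemma activated_mono (D D' : {set V}) k :
  D \subset D' -> activated e tau D k \subset activated e tau D' k.
Proof.
move=> sDD'; elim: k => [|k IH] //=.
apply/subsetP => x; rewrite !inE => /orP[xA|/andP[_ tau_x]].
  by rewrite (subsetP IH x xA).
case: (x \in activated e tau D' k) => //=.
by rewrite (leq_trans tau_x) // subset_leq_card // setIS.
Qed.

Lemma activated_threshold (D : {set V}) k v :
  (tau v <= #|nbhd e v :&: activated e tau D k|)%N -> v \in activated e tau D k.+1.
Proof. by move=> tau_v; rewrite /= !inE tau_v andbT orbN. Qed.

Lemma dyn_le_card (D : {set V}) k :
  activated e tau D k = [set: V] -> (dyn e tau <= #|D|)%N.
Proof.
move=> D_dynamo; apply: (@bigmin_le_cond _ nat); apply/asboolP.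
by exists k.
Qed.

Lemma cover_activatedS (W D : {set V}) v k : (tau v <= deg_in W v)%N ->
  W :\ v \subset activated e tau D k -> W \subset activated e tau D k.+1.
Proof.
move=> tau_v cover; apply/subsetP => w; case: (eqVneq w v) => [->|wv] wW.
  have deg_v : deg_in (W :\ v) v = deg_in W v by rewrite deg_in_setD1 // e_irr.
  apply: activated_threshold; apply: leq_trans tau_v _.
  by rewrite -deg_v subset_leq_card // setIS.
apply: (subsetP (activated_subS D k)); apply: (subsetP cover).
by rewrite !inE wv.
Qed.

Lemma cover_activated_setU1 (W D : {set V}) v k :
  W :\ v \subset activated e tau D k -> W \subset activated e tau (v |: D) k.
Proof.
move=> cover; apply/subsetP => w wW; case: (eqVneq w v) => [->|wv].
  by apply: (subsetP (activated_sub _ _)); rewrite setU11.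
apply: (subsetP (activated_mono k (subsetUr [set v] D))); apply: (subsetP cover).
by rewrite !inE wv.
Qed.

End Activation.

Section Potential.
Variables (R : realFieldType) (V : finType) (e : rel V) (tau : thr V).
Hypothesis e_irr : irreflexive e.

Definition potential (W : {set V}) : R := \sum_(u in W) weight R (tau u) (deg_in e W u).

Definition seed_cost (W : {set V}) (v : V) : R :=
  if (tau v <= deg_in e W v)%N then 0 else 1.

Lemma card_nbhd_setD1 (W : {set V}) u : #|(W :\ u) :&: nbhd e u| = deg_in e W u.
Proof.
rewrite /deg_in setIC; apply: eq_card => v; rewrite !inE.
by case: eqP => // ->; rewrite e_irr.
Qed.

Lemma sum_weight_setD1 (W : {set V}) u : u \in W ->
  seed_cost W u + \sum_(v in W :\ u) weight R (tau u) (deg_in e (W :\ v) u)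
  = #|W|%:R * weight R (tau u) (deg_in e W u).
Proof.
move=> uW; set d := deg_in e W u.
rewrite (bigID (e u)) /=.
rewrite (eq_bigr (fun _ => weight R (tau u) d.-1)); last first.
  by move=> v /andP[/setD1P[_ vW] euv]; rewrite deg_in_setD1 // euv.
rewrite [X in _ + (_ + X)](eq_bigr (fun _ => weight R (tau u) d)); last first.
  by move=> v /andP[/setD1P[_ vW] /negbTE euv]; rewrite deg_in_setD1 // euv.
rewrite (eq_bigl (mem ((W :\ u) :&: nbhd e u))); last by move=> v; rewrite !inE.
rewrite [X in _ + (_ + X)](eq_bigl (mem ((W :\ u) :\: nbhd e u))); last first.
  by move=> v; rewrite !inE andbC.
have card_W : #|W| = (d + #|(W :\ u) :\: nbhd e u|).+1.
  by rewrite /d (cardsD1 u W) uW -(card_nbhd_setD1 W u) cardsID.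
by rewrite !sumr_const card_nbhd_setD1 card_W -weight_recurrence !mulr_natl addrA.
Qed.

Lemma sum_potential_setD1 (W : {set V}) :
  \sum_(v in W) (seed_cost W v + potential (W :\ v)) = #|W|%:R * potential W.
Proof.
rewrite big_split /= /potential.
rewrite (exchange_big_dep (mem W)) /=; last by move=> v u _ /setD1P[].
rewrite -big_split mulr_sumr; apply: eq_bigr => u uW.
rewrite -sum_weight_setD1 //; congr (_ + _); apply: eq_bigl => v.
by rewrite !inE uW andbT andbC eq_sym.
Qed.

Lemma exists_cheap_vertex (W : {set V}) : W != set0 ->
  exists2 v, v \in W & seed_cost W v + potential (W :\ v) <= potential W.
Proof.
move=> /set0Pn[x xW].
case: (pickP [pred v in W | seed_cost W v + potential (W :\ v) <= potential W]).
  by move=> v /andP[vW cheap_v]; exists v.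
move=> no_cheap; suff: \sum_(v in W) potential W < #|W|%:R * potential W.
  by rewrite sumr_const mulr_natl ltxx.
rewrite -sum_potential_setD1; apply: ltr_sum.
  by apply/hasP; exists x; rewrite ?mem_index_enum.
move=> v vW; rewrite ltNge; apply/negP => cheap_v.
by have := no_cheap v; rewrite /= vW cheap_v.
Qed.

Lemma exists_cover_le_potential (W : {set V}) : exists (D : {set V}) k,
  #|D|%:R <= potential W /\ W \subset activated e tau D k.
Proof.
elim: {W}_.+1 {-2}W (ltnSn #|W|) => // n IH W card_W.
have [->|W_neq0] := eqVneq W set0.
  by exists set0, 0; rewrite cards0 /potential big_set0 sub0set.
have [v vW cheap_v] := exists_cheap_vertex W_neq0.
have [|D [k [card_D cover]]] := IH (W :\ v).
  by rewrite (cardsD1 v W) vW in card_W.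
move: cheap_v; rewrite /seed_cost; case: leqP => [tau_v|_] cheap_v.
  exists D, k.+1; split; last exact: (cover_activatedS e_irr tau_v cover).
  by apply: le_trans cheap_v; rewrite add0r.
exists (v |: D), k; split; last exact: cover_activated_setU1.
apply: le_trans cheap_v; rewrite cardsU1 natrD.
by apply: lerD; rewrite ?lern1 ?leq_b1.
Qed.

Lemma dyn_le_potential : (dyn e tau)%:R <= potential [set: V].
Proof.
have [D [k [card_D cover]]] := exists_cover_le_potential [set: V].
apply: le_trans card_D; rewrite ler_nat; apply: (dyn_le_card (k := k)).
by apply/eqP; rewrite eqEsubset subsetT.
Qed.

End Potential.

Lemma card_edges_lt (V : finType) (e : rel V) : irreflexive e ->
  (0 < #|V|)%N -> (#|edges e| < #|V| * #|V|)%N.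
Proof.
move=> e_irr /card_gt0P[x _].
set arcs := [set p : V * V | e p.1 p.2].
have edges_sub : edges e \subset [set [set p.1; p.2] | p in arcs].
  apply/subsetP => E; rewrite inE => /existsP[y /existsP[z /andP[eyz /eqP->]]].
  by apply/imsetP; exists (y, z); rewrite ?inE.
apply: leq_ltn_trans (subset_leq_card edges_sub) _.
apply: leq_ltn_trans (leq_imset_card _ _) _.
rewrite -card_prod -cardsT; apply: proper_card; apply/properP.
by split; [exact: subsetT | exists (x, x); rewrite ?inE //= e_irr].
Qed.

Lemma sum_thr_le (R : realFieldType) (V : finType) (tau : thr V) (t : R) :
  0 <= t -> avg_thr R tau <= t -> \sum_v (tau v : nat)%:R <= t *+ #|V|.
Proof.
move=> t_ge0; have [V0|V_gt0] := posnP #|V|.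
  by rewrite big_pred0 ?mulrn_wge0 // => v; have := card0_eq V0 v.
by rewrite /avg_thr ler_pdivrMr ?ltr0n // natr_sum mulr_natr.
Qed.

Lemma dyn_le_avg (R : realFieldType) (V : finType) (e : rel V) (tau : thr V) (t : R) :
  irreflexive e -> valid_thr e tau -> 0 < t -> avg_thr R tau <= t ->
  (dyn e tau)%:R <= t / (t + 1) *+ #|V|.
Proof.
move=> e_irr /forallP tau_le_deg t_gt0 avg_le_t.
apply: le_trans (dyn_le_potential R tau e_irr) _.
have sum_tau := sum_thr_le (ltW t_gt0) avg_le_t.
apply: le_trans (sum_div_add1_le t_gt0 (fun v => ler0n _ _) sum_tau).
rewrite /potential (eq_bigl xpredT) => [|v]; last by rewrite inE.
apply: ler_sum => v _; rewrite /deg_in setIT.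
exact: weight_le_div_add1 (tau_le_deg v).
Qed.

Theorem proposition4 (R : realFieldType) (V : finType) (e : rel V)
  (e_sym : symmetric e) (e_irr : irreflexive e) (c t : R)
  (hc : 0 < c) (ht : 0 < t)
  (htc : t <= c * eps e R / (#|V|)%:R) :
  (Ldyn e t)%:R < c / (c + 1) * (#|V|)%:R.
Proof.
set n := #|V|.
have n_gt0 : (0 < n)%N.
  rewrite lt0n; apply: contraTneq htc => n0.
  by rewrite /eps -/n n0 mulr0n invr0 !mulr0 -ltNge.
have n_pos : (0 : R) < n%:R by rewrite ltr0n.
have t_lt_c : t < c.
  apply: le_lt_trans htc _; rewrite ltr_pdivrMr // ltr_pM2l // ltr_pdivrMr //.
  by rewrite -natrM ltr_nat card_edges_lt.
have bound_pos : 0 < c / (c + 1) * n%:R.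
  by rewrite mulr_gt0 // divr_gt0 // ltr_wpDl // ltW.
apply: (big_ind (fun m : nat => m%:R < c / (c + 1) * n%:R)) => //.
  by move=> x y x_lt y_lt; rewrite /maxn; case: ifP.
move=> tau /andP[tau_valid avg_le_t].
apply: le_lt_trans (dyn_le_avg e_irr tau_valid ht avg_le_t) _.
by rewrite -mulr_natr ltr_pM2r // ltr_div_add1 // ltW.
Qed.
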